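(* Let $X=\{X(t)\}_{t\in[0,1]}$ be a centered second-order stochastic process with trajectories in $L^2[0,1]$ which is sample-continuous (all trajectories are continuous functions). Let $\Theta=\bigcup_{p\ge1}\Theta_p$ with $\Theta_p=\mathbb{R}^p\times[0,1]^p\times\mathbb{R}\times\mathbb{R}^+_0$, generic element $\theta=(\beta_1,\dots,\beta_p,t_1,\dots,t_p,\alpha_0,\sigma^2)$, equipped with the metric $d(\theta,\theta')=\min\{\|\theta-\theta'\|,1\}$ if $\theta,\theta'$ lie in the same $\Theta_p$ and $1$ otherwise, and its Borel $\sigma$-algebra. For $\theta\in\Theta_p$ let $P_\theta$ be the distribution on $L^2[0,1]\times\mathbb{R}$ of $(X,Y)$, where $X$ has the law of the process and $Y\mid X\sim\mathcal N(\alpha_0+\sum_{j=1}^p\beta_jX(t_j),\sigma^2)$. Then the map $\theta\mapsto P_\theta(A)$ is measurable for every measurable set $A\subseteq L^2[0,1]\times\mathbb{R}$. *)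

From HB Require Import structures.
From mathcomp Require Import all_boot all_order all_algebra.
From mathcomp Require Import all_classical all_reals all_analysis.
From mathcomp Require Import measurable_realfun.
Set Implicit Arguments. Unset Strict Implicit. Unset Printing Implicit Defensive.
Import Order.TTheory GRing.Theory Num.Def Num.Theory.
Import numFieldNormedType.Exports.
Local Open Scope classical_set_scope.
Local Open Scope ring_scope.

Definition metric_opens {R : realType} {T : Type} (dist : T -> T -> R)
  : set (set T) :=
  [set U | forall x, U x -> exists2 e : R, 0 < e & forall y, dist x y < e -> U y].

(* The Borel
   sigma-algebra of this pseudo-metric consists exactly of the preimages
   of Borel sets of the quotient L^2[0,1] (functions mod a.e. equality). *)
Record L2 (R : realType) := MkL2 {
  l2f : R -> R ;
  l2_meas : measurable_fun (`[0%R, 1%R] : set R) l2f ;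
  l2_fin : (\int[@lebesgue_measure R]_(x in `[0%R, 1%R]) ((l2f x) ^+ 2)%:E < +oo)%E }.

Section L2_inst.
Variable R : realType.
Lemma L2_zero_meas : measurable_fun (`[0%R, 1%R] : set R) (fun _ : R => 0 : R).
Proof. exact: measurable_cst. Qed.
Lemma L2_zero_fin :
  (\int[@lebesgue_measure R]_(x in `[0%R, 1%R]) (((fun _ : R => 0 : R) x) ^+ 2)%:E < +oo)%E.
Proof.
under eq_integral do rewrite expr0n /=.
by rewrite integral0 ltry.
Qed.
HB.instance Definition _ := gen_eqMixin (L2 R).
HB.instance Definition _ := gen_choiceMixin (L2 R).
HB.instance Definition _ := isPointed.Build (L2 R) (MkL2 L2_zero_meas L2_zero_fin).
End L2_inst.

Definition L2dist {R : realType} (f g : L2 R) : R :=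
  Num.sqrt (fine (\int[@lebesgue_measure R]_(x in `[0%R, 1%R])
                    ((l2f f x - l2f g x) ^+ 2)%:E)).

Definition L2M (R : realType) := g_sigma_algebraType (metric_opens (@L2dist R)).

Definition Theta_wf {R : realType} (b t : seq R) (s2 : R) : bool :=
  [&& (0 < size b)%N, size t == size b, all (fun u => 0 <= u <= 1) t & 0 <= s2].

Record Theta (R : realType) := MkTheta {
  th_beta : seq R ;
  th_t : seq R ;
  th_alpha : R ;
  th_sigma2 : R ;
  th_wf : Theta_wf th_beta th_t th_sigma2 }.

Section Theta_inst.
Variable R : realType.
Lemma Theta_wf0 : Theta_wf [:: 0 : R] [:: 0 : R] 0.
Proof. by rewrite /Theta_wf /= lexx ler01. Qed.
HB.instance Definition _ := gen_eqMixin (Theta R).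
HB.instance Definition _ := gen_choiceMixin (Theta R).
HB.instance Definition _ := isPointed.Build (Theta R) (MkTheta 0 Theta_wf0).
End Theta_inst.

Definition Theta_eucl {R : realType} (th th' : Theta R) : R :=
  Num.sqrt (\sum_(bb <- zip (th_beta th) (th_beta th')) (bb.1 - bb.2) ^+ 2
          + \sum_(tt <- zip (th_t th) (th_t th')) (tt.1 - tt.2) ^+ 2
          + (th_alpha th - th_alpha th') ^+ 2
          + (th_sigma2 th - th_sigma2 th') ^+ 2).

Definition Theta_dist {R : realType} (th th' : Theta R) : R :=
  if size (th_beta th) == size (th_beta th') then Num.min (Theta_eucl th th') 1
  else 1.

Definition ThetaM (R : realType) := g_sigma_algebraType (metric_opens (@Theta_dist R)).

Definition gaussian {R : realType} (m s2 : R) : set R -> \bar R :=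
  if s2 == 0 then \d_m else normal_prob m (Num.sqrt s2).

Definition reg_mean {R : realType} (th : Theta R) (x : R -> R) : R :=
  th_alpha th + \sum_(bt <- zip (th_beta th) (th_t th)) bt.1 * x bt.2.

(* P_theta(A) for A a subset of L^2[0,1] x R: law of (X, Y) with
   X ~ law of the process, Y | X ~ N(reg_mean theta X, sigma^2). *)
Definition P_theta {R : realType} {d} {Omega : measurableType d}
  (P : probability Omega R) (X : Omega -> L2 R) (th : Theta R)
  (A : set (L2M R * R)) : \bar R :=
  (\int[P]_w gaussian (reg_mean th (l2f (X w))) (th_sigma2 th)
               [set y | A (X w, y)])%E.

From HB Require Import structures.
From mathcomp Require Import all_boot all_order all_algebra.
From mathcomp Require Import all_classical all_reals all_analysis.
From mathcomp Require Import measurable_realfun.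
From mathcomp Require Import lra.
Import Order.TTheory GRing.Theory Num.Def Num.Theory.
Import numFieldTopology.Exports numFieldNormedType.Exports.
Local Open Scope classical_set_scope.
Local Open Scope ring_scope.

(* The Gaussian
   laws form a probability kernel indexed by (mean, variance), so this integrand
   is jointly measurable in (theta, w) as soon as (theta, w) |-> reg_mean theta (X w)
   is, and Tonelli then gives measurability of the integral in theta.  The
   coordinates of theta are measurable because they are 1-Lipschitz for d at
   scales below 1.  Finally (theta, w) |-> X w (t_j) is the pointwise limit, by
   sample continuity, of X w evaluated at t_j rounded down to the grid of mesh
   1/(n+1), a finite sum of measurable products. *)

Section gaussian.
Context {R : realType}.

Lemma invr_measurable : measurable_fun [set: R] GRing.inv.
Proof.
rewrite -(setUCl [set 0]); apply/measurable_funU => //; first exact: measurableC.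
split; last exact: measurable_fun_set1.
apply: subspace_continuous_measurable_fun; first exact: measurableC.
rewrite continuous_subspace_in => x /set_mem /= x0.
by apply: continuous_subspaceT_for => //; apply: inv_continuous; apply/eqP.
Qed.

Lemma measurable_normal_pdf_param :
  measurable_fun [set: (R * R) * R] (fun z => normal_pdf z.1.1 z.1.2 z.2).
Proof.
have ms : measurable_fun [set: (R * R) * R] (fun z => z.1.2).
  exact: measurableT_comp.
have minv (f : (R * R) * R -> R) : measurable_fun [set: (R * R) * R] f ->
    measurable_fun [set: (R * R) * R] (fun z => (f z)^-1).
  exact: measurableT_comp invr_measurable.
apply: measurable_fun_ifT; first exact: measurable_fun_eqr.
  by apply: measurableT_comp => //; exact: measurable_indic.
apply: measurable_funM.
  apply: minv; apply: measurableT_comp (continuous_measurable_fun (@sqrt_continuous R)) _.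
  apply: measurableT_comp (@natmul_measurable R _ 2) _.
  by apply: measurable_funM => //; exact: measurable_funX.
apply: measurableT_comp (@measurable_expR R) _; apply: measurable_funM.
  apply: measurable_funN; apply: measurable_funX; apply: measurable_funB => //.
  exact: measurableT_comp.
apply: minv; apply: measurableT_comp (@natmul_measurable R _ 2) _.
exact: measurable_funX.
Qed.

(* Writing normal_prob as the integral of its density turns joint measurability
   in the parameters into Tonelli's measurability of partial integrals. *)
Lemma measurable_normal_prob_param (U : set R) : measurable U ->
  measurable_fun [set: R * R] (fun p => normal_prob p.1 p.2 U).
Proof.
move=> mU.
pose f (z : (R * R) * R) := (normal_pdf z.1.1 z.1.2 z.2 * \1_U z.2)%:E.
rewrite (_ : (fun p => _) = fubini_F lebesgue_measure f).
  apply: measurable_fun_fubini_tonelli_F => [|z].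
    apply/measurable_EFinP; apply: measurable_funM.
      exact: measurable_normal_pdf_param.
    by apply: measurableT_comp => //; exact: measurable_indic.
  by rewrite lee_fin mulr_ge0 ?normal_pdf_ge0.
apply/funext => p; rewrite /normal_prob integral_mkcond.
apply: eq_integral => y _; rewrite /f /patch indicE.
by case: (y \in U); rewrite ?mulr1 ?mulr0.
Qed.

Lemma measurable_gaussian (U : set R) : measurable U ->
  measurable_fun [set: R * R] (fun p => gaussian p.1 p.2 U).
Proof.
move=> mU; under eq_fun do rewrite /gaussian if_arg.
apply: measurable_fun_ifT; first exact: measurable_fun_eqr.
  under eq_fun do rewrite diracE -indicE; apply/measurable_EFinP.
  by apply: measurableT_comp => //; exact: measurable_indic.
have msqrt : measurable_fun [set: R * R] (fun p => Num.sqrt p.2).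
  exact: measurableT_comp (continuous_measurable_fun (@sqrt_continuous R)) _.
exact: measurableT_comp (measurable_normal_prob_param U mU)
  (measurable_fun_pair measurable_fst msqrt).
Qed.

Section gaussian_measure.
Variables (m s2 : R).

Let gaussian0 : gaussian m s2 set0 = 0%E.
Proof. by rewrite /gaussian; case: ifP => _; exact: measure0. Qed.

Let gaussian_ge0 A : (0 <= gaussian m s2 A)%E.
Proof. by rewrite /gaussian; case: ifP => _; exact: measure_ge0. Qed.

Let gaussian_sigma_additive : semi_sigma_additive (gaussian m s2).
Proof.
rewrite /gaussian; case: ifP => _; first exact: measure_semi_sigma_additive.
exact: (@measure_semi_sigma_additive _ _ _ (normal_prob m (Num.sqrt s2))).
Qed.

HB.instance Definition _ := isMeasure.Build _ _ _ (gaussian m s2)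
  gaussian0 gaussian_ge0 gaussian_sigma_additive.

Lemma gaussian_setT : gaussian m s2 [set: R] = 1%E.
Proof. by rewrite /gaussian; case: ifP => _; exact: probability_setT. Qed.

End gaussian_measure.

Section gaussian_kernel.
Context {d} {T : measurableType d}.

Definition gaussian_kernel (z : T * (R * R)) : {measure set R -> \bar R} :=
  gaussian z.2.1 z.2.2.

Let measurable_gaussian_kernel U :
  measurable U -> measurable_fun [set: T * (R * R)] (gaussian_kernel ^~ U).
Proof.
by move=> mU; exact: measurableT_comp (measurable_gaussian U mU) measurable_snd.
Qed.

HB.instance Definition _ :=
  isKernel.Build _ _ _ _ _ gaussian_kernel measurable_gaussian_kernel.

HB.instance Definition _ :=
  Kernel_isProbability.Build _ _ _ _ _ gaussian_kernel (fun z => gaussian_setT _ _).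

Lemma measurable_gaussian_section (A : set (T * R)) : measurable A ->
  measurable_fun [set: T * (R * R)]
    (fun z => gaussian z.2.1 z.2.2 [set y | A (z.1, y)]).
Proof.
move=> mA.
have mU : measurable [set z : (T * (R * R)) * R | A (z.1.1, z.2)].
  have mp : measurable_fun [set: (T * (R * R)) * R] (fun z => (z.1.1, z.2)).
    by apply: measurable_fun_pair => //; exact: measurableT_comp.
  by rewrite -[X in measurable X]setTI; exact: mp.
have := measurable_fun_xsection_finite_kernel gaussian_kernel (mem_set mU).
apply: eq_measurable_fun => z _; congr (gaussian _ _ _).
by apply/funext => y; rewrite /xsection /= in_setE.
Qed.

End gaussian_kernel.
End gaussian.

Lemma measurable_fun_lipschitz_metric {R : realType} {T : pointedType}
    (dist : T -> T -> R) (f : T -> R) :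
  (forall x y, dist x y < 1 -> `|f x - f y| <= dist x y) ->
  measurable_fun [set: g_sigma_algebraType (metric_opens dist)] f.
Proof.
move=> f_lip.
apply: (measurability (@RGenOInfty.G R)) => [|_ [_ [a ->] <-]].
  exact: RGenOInfty.measurableE.
apply: sub_sigma_algebra; rewrite setTI => x /=.
rewrite in_itv /= andbT -subr_gt0 => ax.
exists (minr (f x - a) 1); first by rewrite lt_min ax ltr01.
move=> y; rewrite lt_min => /andP[dxy dxy1].
have := le_lt_trans (ler_norm _) (le_lt_trans (f_lip _ _ dxy1) dxy).
by rewrite in_itv /= andbT; lra.
Qed.

Lemma sqr_nth_le_sum_zip {R : realDomainType} (s s' : seq R) j :
  size s = size s' ->
  (nth 0 s j - nth 0 s' j) ^+ 2 <= \sum_(p <- zip s s') (p.1 - p.2) ^+ 2.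
Proof.
elim: s s' j => [|a s IH] [|b s'] //= j.
  by move=> _; rewrite nth_nil subr0 expr0n big_nil.
case=> /IH {}IH; rewrite big_cons; case: j => [|j] /=.
  by rewrite lerDl sumr_ge0 // => p _; exact: sqr_ge0.
by rewrite (le_trans (IH j)) // lerDr sqr_ge0.
Qed.

Section Theta.
Context {R : realType}.
Implicit Types th : Theta R.

Lemma size_th_t th : size (th_t th) = size (th_beta th).
Proof. by have /and4P[_ /eqP -> _ _] := th_wf th. Qed.

Lemma nth_th_t_itv th j : 0 <= nth 0 (th_t th) j <= 1.
Proof.
have /and4P[_ _ /allP t01 _] := th_wf th.
have [jt|tj] := ltnP j (size (th_t th)); first exact/t01/mem_nth.
by rewrite nth_default // lexx ler01.
Qed.

Lemma Theta_dist_coord j th th' : Theta_dist th th' < 1 ->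
  [/\ `|nth 0 (th_beta th) j - nth 0 (th_beta th') j| <= Theta_dist th th',
      `|nth 0 (th_t th) j - nth 0 (th_t th') j| <= Theta_dist th th',
      `|th_alpha th - th_alpha th'| <= Theta_dist th th' &
      `|th_sigma2 th - th_sigma2 th'| <= Theta_dist th th'].
Proof.
rewrite /Theta_dist; case: eqP => [sb|_]; last by rewrite ltxx.
rewrite gt_min ltxx orbF => /ltW/min_l ->; rewrite /Theta_eucl.
have st : size (th_t th) = size (th_t th') by rewrite !size_th_t.
have := sqr_nth_le_sum_zip _ _ j sb; have := sqr_nth_le_sum_zip _ _ j st.
have := sqr_ge0 (th_alpha th - th_alpha th').
have := sqr_ge0 (th_sigma2 th - th_sigma2 th').
have : 0 <= \sum_(p <- zip (th_beta th) (th_beta th')) (p.1 - p.2) ^+ 2.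
  by rewrite sumr_ge0 // => p _; exact: sqr_ge0.
have : 0 <= \sum_(p <- zip (th_t th) (th_t th')) (p.1 - p.2) ^+ 2.
  by rewrite sumr_ge0 // => p _; exact: sqr_ge0.
by move=> *; split; rewrite -sqrtr_sqr ler_wsqrtr //; lra.
Qed.

Lemma measurable_th_beta j :
  measurable_fun [set: ThetaM R] (fun th : ThetaM R => nth 0 (th_beta th) j).
Proof.
by apply: measurable_fun_lipschitz_metric => th th' /(Theta_dist_coord j) [].
Qed.

Lemma measurable_th_t j :
  measurable_fun [set: ThetaM R] (fun th : ThetaM R => nth 0 (th_t th) j).
Proof.
by apply: measurable_fun_lipschitz_metric => th th' /(Theta_dist_coord j) [].
Qed.

Lemma measurable_th_alpha :
  measurable_fun [set: ThetaM R] (fun th : ThetaM R => th_alpha th).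
Proof.
by apply: measurable_fun_lipschitz_metric => th th' /(Theta_dist_coord 0) [].
Qed.

Lemma measurable_th_sigma2 :
  measurable_fun [set: ThetaM R] (fun th : ThetaM R => th_sigma2 th).
Proof.
by apply: measurable_fun_lipschitz_metric => th th' /(Theta_dist_coord 0) [].
Qed.

End Theta.

Section grid_floor.
Context {R : realType}.

Definition grid_floor (n : nat) (t : R) : R := (trunc (n.+1%:R * t))%:R / n.+1%:R.

Lemma grid_floor_bounds n t : 0 <= t ->
  [/\ 0 <= grid_floor n t, grid_floor n t <= t & t - n.+1%:R^-1 <= grid_floor n t].
Proof.
move=> t0; have n0 : 0 < n.+1%:R :> R by rewrite ltr0n.
have /andP[tr_le lt_tr] := truncn_itv (mulr_ge0 (ler0n _ n.+1) t0).
rewrite /grid_floor divr_ge0 // ler_pdivrMr // [t * _]mulrC tr_le.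
split => //; rewrite -(ler_pM2r n0) mulrBl mulVf ?gt_eqF // divfK ?gt_eqF //.
by move: lt_tr; rewrite -natr1; lra.
Qed.

Lemma grid_floor_cvg t : 0 <= t -> grid_floor n t @[n --> \oo] --> t.
Proof.
move=> t0; apply: (@squeeze_cvgr _ _ _ _ (fun n => t - harmonic n) (fun=> t)).
- by near=> n; have [_ -> ->] := grid_floor_bounds n t t0.
- by rewrite -[X in _ --> X]subr0; apply: cvgB; [exact: cvg_cst|exact: cvg_harmonic].
- exact: cvg_cst.
Unshelve. all: end_near.
Qed.

Lemma grid_floor_cvg_within (f : R -> R) t : {within `[0, 1], continuous f} ->
  0 <= t <= 1 -> f (grid_floor n t) @[n --> \oo] --> f t.
Proof.
move=> f_cont /andP[t0 t1].
have t01 : `[0, 1]%classic t by rewrite /= in_itv /= t0.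
apply: (@cvg_comp _ _ _ (grid_floor ^~ t) f _ (within `[0, 1] (nbhs t))).
  move=> P /= P_near.
  have : \forall n \near \oo, `[0, 1]%classic (grid_floor n t) -> P (grid_floor n t).
    exact: grid_floor_cvg t0 _ P_near.
  apply: filterS => n /=; apply.
  have [g0 gt _] := grid_floor_bounds n t t0.
  by rewrite /= in_itv /= g0 (le_trans gt).
by move=> P; rewrite nbhs_subspace_in //; exact: f_cont.
Qed.

Lemma sum_indic_trunc (N : nat) (z : R) (F : nat -> R) : 0 <= z < N%:R ->
  \sum_(k < N) \1_(`[k%:R, k.+1%:R[ : set R) z * F k = F (trunc z).
Proof.
move=> /andP[z0 zN]; have /andP[tr_le lt_tr] := truncn_itv z0.
have trN : (trunc z < N)%N by rewrite -(ltr_nat R) (le_lt_trans tr_le).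
rewrite (bigD1 (Ordinal trN)) //= big1 ?addr0.
  by rewrite indicE mem_set ?mul1r //= in_itv /= tr_le lt_tr.
move=> k /eqP k_tr; rewrite indicE memNset ?mul0r //= in_itv /= => /andP[kz zk].
by apply: k_tr; apply: val_inj; apply/esym/truncn_def; rewrite kz zk.
Qed.

End grid_floor.

Section measurable_eval_at.
Context {R : realType} d d' (T : measurableType d) (Omega : measurableType d').
Variables (x : Omega -> R -> R) (g : T -> R).
Hypothesis mx : forall t, t \in `[0, 1] -> measurable_fun [set: Omega] (x ^~ t).
Hypothesis x_cont : forall w, {within `[0, 1], continuous (x w)}.
Hypothesis mg : measurable_fun [set: T] g.
Hypothesis g01 : forall a, 0 <= g a <= 1.

Lemma measurable_grid_eval n :
  measurable_fun [set: T * Omega] (fun z => x z.2 (grid_floor n (g z.1))).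
Proof.
have gridE z : x z.2 (grid_floor n (g z.1)) = \sum_(k < n.+2)
    \1_(`[k%:R, k.+1%:R[ : set R) (n.+1%:R * g z.1) * x z.2 (k%:R / n.+1%:R).
  have /andP[g0 g1] := g01 z.1.
  rewrite (sum_indic_trunc _ _ (fun k => x z.2 (k%:R / n.+1%:R))) // mulr_ge0 //=.
  by rewrite (@le_lt_trans _ _ n.+1%:R) ?ltr_nat // ler_piMr.
rewrite (funext gridE); apply: measurable_sum => k; apply: measurable_funM.
  apply: measurableT_comp; first exact: measurable_indic.
  by apply: measurable_funM => //; exact: measurableT_comp.
have k01 : (k%:R / n.+1%:R : R) \in `[0, 1].
  by rewrite in_itv /= divr_ge0 //= ler_pdivrMr ?ltr0n // mul1r ler_nat -ltnS.
exact: measurableT_comp (mx _ k01) measurable_snd.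
Qed.

Lemma measurable_eval_at : measurable_fun [set: T * Omega] (fun z => x z.2 (g z.1)).
Proof.
apply: (measurable_fun_cvg (h := fun n z => x z.2 (grid_floor n (g z.1)))).
  exact: measurable_grid_eval.
by move=> z _; exact: grid_floor_cvg_within.
Qed.

End measurable_eval_at.

Lemma reg_mean_sum_ord {R : realType} (th : Theta R) (y : R -> R) n :
  (size (th_beta th) <= n)%N -> reg_mean th y =
    th_alpha th + \sum_(j < n) nth 0 (th_beta th) j * y (nth 0 (th_t th) j).
Proof.
rewrite /reg_mean => bn; congr (_ + _); have := size_th_t th.
elim: (th_beta th) (th_t th) n bn => [|b bs IH] [|t ts] [|n] //=.
- by move=> _ _; rewrite big_nil big_ord0.
- by move=> _ _; rewrite big_nil big1 // => j _; rewrite nth_nil mul0r.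
by move=> bn [] st; rewrite big_cons big_ord_recl /= (IH ts n).
Qed.

(* The dimension p of theta varies, so reg_mean is approximated by sums over
   j < n, which pad beta with zeros and are eventually equal to it. *)
Lemma measurable_reg_mean {R : realType} {d} {Omega : measurableType d}
    (x : Omega -> R -> R) :
  (forall t, t \in `[0, 1] -> measurable_fun [set: Omega] (x ^~ t)) ->
  (forall w, {within `[0, 1], continuous (x w)}) ->
  measurable_fun [set: ThetaM R * Omega] (fun z => reg_mean z.1 (x z.2)).
Proof.
move=> mx x_cont; apply: (measurable_fun_cvg (h := fun n (z : ThetaM R * Omega) =>
  th_alpha z.1 + \sum_(j < n) nth 0 (th_beta z.1) j * x z.2 (nth 0 (th_t z.1) j))).
  move=> n; apply: measurable_funD.
    exact: measurableT_comp measurable_th_alpha measurable_fst.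
  apply: measurable_sum => j; apply: measurable_funM.
    exact: measurableT_comp (measurable_th_beta j) measurable_fst.
  exact: measurable_eval_at mx x_cont (measurable_th_t j) (nth_th_t_itv ^~ j).
move=> [th w] _; apply: cvg_near_cst; near=> n.
by rewrite (reg_mean_sum_ord _ _ n) //; near: n; exact: nbhs_infty_ge.
Unshelve. all: end_near.
Qed.

Theorem proposition3 (R : realType) (d : measure_display) (Omega : measurableType d)
  (P : probability Omega R) (X : Omega -> L2 R)
  (* X is a random element of L^2[0,1] *)
  (hXmeas : measurable_fun setT (X : Omega -> L2M R))
  (* each X(t) is a random variable *)
  (hXt : forall t, t \in `[0, 1] -> measurable_fun setT (fun w => l2f (X w) t))
  (* second order *)
  (h2 : forall t, t \in `[0, 1] ->
          P.-integrable setT (fun w => ((l2f (X w) t) ^+ 2)%:E))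
  (* centered *)
  (hc : forall t, t \in `[0, 1] -> ('E_P[fun w => l2f (X w) t] = 0)%E)
  (* sample-continuous *)
  (hcont : forall w, {within `[0, 1], continuous (l2f (X w))}) :
  forall A : set (L2M R * R), measurable A ->
    measurable_fun [set: ThetaM R] (fun th : ThetaM R => P_theta P X th A : \bar R).
Proof.
move=> A mA.
pose G (z : ThetaM R * Omega) : L2M R * (R * R) :=
  (X z.2, (reg_mean z.1 (l2f (X z.2)), th_sigma2 z.1)).
have mG : measurable_fun setT G.
  apply: measurable_fun_pair; first exact: measurableT_comp.
  apply: measurable_fun_pair; first exact: measurable_reg_mean (fun w => l2f (X w)) hXt hcont.
  exact: measurableT_comp measurable_th_sigma2 measurable_fst.
apply: (@measurable_fun_fubini_tonelli_F _ _ _ _ _ P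
  (fun z => gaussian (G z).2.1 (G z).2.2 [set y | A ((G z).1, y)])) => [|z].
  exact: measurableT_comp (measurable_gaussian_section A mA) mG.
exact: measure_ge0.
Qed.
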